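(* For every integer $a\geq 1$, $$\sum_{n=1}^{\infty}\frac{(-1)^n\widetilde H_{n-1}^{(2a)}}{n}=\frac12\zeta(2a+1)-\Big(a+\frac12\Big)\widetilde\zeta(2a+1)+\ln 2\,\zeta(2a)+\sum_{j=1}^{a-1}\widetilde\zeta(2j+1)\zeta(2a-2j),$$ where an empty sum equals $0$.
   Context: For integers $b\geq 1$: $\widetilde H_0^{(b)}=0$ and $\widetilde H_n^{(b)}=\sum_{k=1}^{n}\frac{(-1)^{k-1}}{k^b}$ for $n\geq 1$. For real $s>1$, $\widetilde\zeta(s)=\sum_{n\geq 1}\frac{(-1)^{n-1}}{n^s}$, and $\zeta$ is the Riemann zeta function. The series on the left converges (conditionally). *)

From Stdlib Require Import Reals.
From Coquelicot Require Import Coquelicot.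
Open Scope R_scope.

Definition altH (b n : nat) : R :=
  sum_n_m (fun k => (-1) ^ (k - 1) / (INR k) ^ b) 1 n.

Definition zeta (s : nat) : R := Series (fun m => / (INR (S m)) ^ s).

Definition altzeta (s : nat) : R :=
  Series (fun m => (-1) ^ m / (INR (S m)) ^ s).

From Stdlib Require Import Reals Lra Lia.
From Coquelicot Require Import Coquelicot.
Open Scope R_scope.

(* Summation by parts against the partial sums [L_n = sum_(t<=n) (-1)^t/t], which tend to
   [-ln 2], turns the series into [sum_m (-1)^m L_m / m^(2a) - ln 2 * altzeta (2a)].
   The remaining sum is found by summing the absolutely convergent double series
   [sum_(k<>m) (-1)^k / (k^(2a-1) (m^2 - k^2))] in both orders.  Over [m] first,
   [sum_(m<>k) 1/(m^2 - k^2) = 3/(4k^2)] gives [-(3/4) altzeta (2a+1)].  Over [k] first,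
   the partial fraction expansion of [1/(k^(2a-1) (m^2 - k^2))] in [k] produces products of
   zeta and alternating zeta values, together with the unknown sum itself. *)

(* Coquelicot's generic [sum_n_m] lemmas leave goals stated in [AbelianMonoid.sort _];
   [ring] and [field] only recognise them once the type is shown to be [R]. *)
Ltac Rring := match goal with |- @eq _ ?x ?y => change (@eq R x y) end; ring.
Ltac Rfield := match goal with |- @eq _ ?x ?y => change (@eq R x y) end; field.

Lemma sum_n_m_Rplus (u v : nat -> R) n m :
  sum_n_m (fun k => u k + v k) n m = sum_n_m u n m + sum_n_m v n m.
Proof. apply (sum_n_m_plus u v). Qed.

Lemma sum_n_m_Rmult_l (c : R) (u : nat -> R) n m :
  sum_n_m (fun k => c * u k) n m = c * sum_n_m u n m.
Proof. apply (sum_n_m_mult_l c u). Qed.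

Lemma sum_n_m_Rmult_r (c : R) (u : nat -> R) n m :
  sum_n_m (fun k => u k * c) n m = sum_n_m u n m * c.
Proof. apply (sum_n_m_mult_r c u). Qed.

Lemma sum_n_m_Ropp (u : nat -> R) n m :
  sum_n_m (fun k => - u k) n m = - sum_n_m u n m.
Proof.
  rewrite (sum_n_m_ext _ (fun k => -1 * u k)) by (intro; Rring).
  rewrite sum_n_m_Rmult_l; Rring.
Qed.

Lemma sum_n_m_Rminus (u v : nat -> R) n m :
  sum_n_m (fun k => u k - v k) n m = sum_n_m u n m - sum_n_m v n m.
Proof. unfold Rminus. rewrite sum_n_m_Rplus, sum_n_m_Ropp. reflexivity. Qed.

Lemma sum_n_m_empty (u : nat -> R) n m : (m < n)%nat -> sum_n_m u n m = 0.
Proof. intro H. rewrite sum_n_m_zero by exact H. reflexivity. Qed.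

Lemma sum_n_m_Sr (u : nat -> R) n m : (n <= S m)%nat ->
  sum_n_m u n (S m) = sum_n_m u n m + u (S m).
Proof. intro H. rewrite sum_n_Sm by exact H. reflexivity. Qed.

Lemma sum_n_Sr (u : nat -> R) N : sum_n u (S N) = sum_n u N + u (S N).
Proof. rewrite sum_Sn. reflexivity. Qed.

Lemma sum_n_from_1 (u : nat -> R) N : u 0%nat = 0 -> sum_n u N = sum_n_m u 1 N.
Proof.
  intro H0. unfold sum_n. destruct N.
  - rewrite sum_n_n, sum_n_m_zero; auto.
  - rewrite sum_Sn_m, H0 by lia. apply Rplus_0_l.
Qed.

Lemma sum_n_m_reflect (u : nat -> R) n :
  sum_n_m u 1 n = sum_n_m (fun t => u (S n - t)%nat) 1 n.
Proof.
  induction n.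
  - rewrite !sum_n_m_empty by lia; reflexivity.
  - rewrite sum_n_m_Sr, (sum_Sn_m _ 1 (S n)), IHn, <- sum_n_m_S by lia.
    rewrite (sum_n_m_ext _ (fun t => u (S (S n) - S t)%nat)) by reflexivity.
    replace (S (S n) - 1)%nat with (S n) by lia.
    unfold plus; simpl; ring.
Qed.

Lemma sum_n_m_drop (u : nat -> R) m K : (1 <= m <= K)%nat ->
  sum_n_m (fun k => if Nat.eqb k m then 0 else u k) 1 K = sum_n_m u 1 K - u m.
Proof.
  intros [H1 H2]. induction H2.
  - destruct m as [|m]; [lia|]. rewrite !sum_n_m_Sr, Nat.eqb_refl by lia.
    rewrite (sum_n_m_ext_loc _ u); [Rring|].
    intros k Hk. destruct (Nat.eqb_spec k (S m)); [lia | reflexivity].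
  - rewrite !sum_n_m_Sr, IHle by lia.
    destruct (Nat.eqb_spec (S m0) m); [lia | Rring].
Qed.

Lemma is_series_of_lim (f : nat -> R) (l : R) : is_lim_seq (sum_n f) l -> is_series f l.
Proof. intro H; exact H. Qed.

Lemma is_lim_of_series (f : nat -> R) (l : R) : is_series f l -> is_lim_seq (sum_n f) l.
Proof. intro H; exact H. Qed.

Lemma INR_S_pos n : 0 < INR (S n).
Proof. apply lt_0_INR; lia. Qed.

Lemma is_lim_seq_inv_S : is_lim_seq (fun n => / INR (S n)) 0.
Proof.
  assert (H := is_lim_seq_inv INR p_infty is_lim_seq_INR).
  apply is_lim_seq_incr_1 in H; [exact H | discriminate].
Qed.

Lemma is_lim_seq_0_of_le_div_S (u : nat -> R) (c : R) :
  (forall n, Rabs (u n) <= c / INR (S n)) -> is_lim_seq u 0.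
Proof.
  intro H.
  assert (Hc : is_lim_seq (fun n => c / INR (S n)) 0).
  { replace 0 with (c * 0) by ring.
    apply is_lim_seq_mult'; [apply is_lim_seq_const | apply is_lim_seq_inv_S]. }
  apply is_lim_seq_le_le with (fun n => - (c / INR (S n))) (fun n => c / INR (S n)).
  - intro n. apply Rabs_le_between, H.
  - replace (Finite 0) with (Rbar_opp 0) by (simpl; f_equal; ring).
    apply (is_lim_seq_opp (fun n => c / INR (S n))), Hc.
  - exact Hc.
Qed.

Section NonnegSums.

Variable f : nat -> R.
Hypothesis f_ge0 : forall n, 0 <= f n.

Lemma sum_n_ge0 N : 0 <= sum_n f N.
Proof. induction N; [rewrite sum_O | rewrite sum_n_Sr]; auto. specialize (f_ge0 (S N)); lra. Qed.

Lemma sum_n_le_mono N N' : (N <= N')%nat -> sum_n f N <= sum_n f N'.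
Proof. induction 1; [lra | rewrite sum_n_Sr]. specialize (f_ge0 (S m)); lra. Qed.

Lemma term_le_sum_n k K : (k <= K)%nat -> f k <= sum_n f K.
Proof.
  intro Hk. apply Rle_trans with (sum_n f k); [| apply sum_n_le_mono, Hk].
  destruct k; [rewrite sum_O; lra | rewrite sum_n_Sr]. pose proof (sum_n_ge0 k); lra.
Qed.

Lemma sum_n_le_series l N : is_series f l -> sum_n f N <= l.
Proof.
  intro Hl. apply is_lim_of_series, (is_lim_seq_incr_n _ N) in Hl.
  exact (is_lim_seq_le _ _ _ _ (fun n => sum_n_le_mono N (n + N) ltac:(lia))
           (is_lim_seq_const _) Hl).
Qed.

Lemma series_ge0 l : is_series f l -> 0 <= l.
Proof. intro Hl. eapply Rle_trans; [apply (sum_n_ge0 0) | apply sum_n_le_series, Hl]. Qed.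

Lemma is_series_of_bounded B : (forall N, sum_n f N <= B) ->
  exists l, is_series f l /\ l <= B.
Proof.
  intro HB. destruct (ex_finite_lim_seq_incr (sum_n f) B) as [l Hl].
  - intro n. rewrite sum_n_Sr. specialize (f_ge0 (S n)); lra.
  - exact HB.
  - exists l. split; [exact Hl | exact (is_lim_seq_le _ _ _ _ HB Hl (is_lim_seq_const B))].
Qed.

End NonnegSums.

Lemma sum_n_Rle (f g : nat -> R) N : (forall n, f n <= g n) -> sum_n f N <= sum_n g N.
Proof. intro H. induction N; [rewrite !sum_O | rewrite !sum_n_Sr; specialize (H (S N))]; auto; lra. Qed.

Lemma is_lim_seq_sum_n (u : nat -> nat -> R) (v : nat -> R) K :
  (forall k, is_lim_seq (u k) (v k)) ->
  is_lim_seq (fun M => sum_n (fun k => u k M) K) (sum_n v K).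
Proof.
  intro H. induction K.
  - rewrite sum_O. eapply is_lim_seq_ext; [| apply (H 0%nat)].
    intro; rewrite sum_O; reflexivity.
  - rewrite sum_n_Sr. eapply is_lim_seq_ext; [| apply (is_lim_seq_plus' _ _ _ _ IHK (H (S K)))].
    intro; rewrite sum_n_Sr; reflexivity.
Qed.

Definition rect_sum (b : nat -> nat -> R) K M := sum_n (fun k => sum_n (b k) M) K.

Lemma rect_sum_transpose b K M : rect_sum b K M = rect_sum (fun m k => b k m) M K.
Proof. apply sum_n_switch. Qed.

Lemma rect_sum_Rplus (b c : nat -> nat -> R) K M :
  rect_sum (fun k m => b k m + c k m) K M = rect_sum b K M + rect_sum c K M.
Proof.
  unfold rect_sum. rewrite (sum_n_ext _ (fun k => sum_n (b k) M + sum_n (c k) M)).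
  - apply (sum_n_plus (fun k => sum_n (b k) M)).
  - intro k. apply (sum_n_plus (b k)).
Qed.

Lemma rect_sum_Rle (b c : nat -> nat -> R) K M :
  (forall k m, b k m <= c k m) -> rect_sum b K M <= rect_sum c K M.
Proof. intro H. apply sum_n_Rle; intro k; apply sum_n_Rle; intro m; apply H. Qed.

Section Tonelli.

Variable b : nat -> nat -> R.
Hypothesis b_ge0 : forall k m, 0 <= b k m.

Lemma rect_sum_le_mono K M K' M' : (K <= K')%nat -> (M <= M')%nat ->
  rect_sum b K M <= rect_sum b K' M'.
Proof.
  intros HK HM. apply Rle_trans with (rect_sum b K M').
  - apply sum_n_Rle. intro k. apply sum_n_le_mono; auto.
  - apply sum_n_le_mono; auto. intro; apply sum_n_ge0; auto.
Qed.

Lemma is_lim_seq_rect_sum (row : nat -> R) K :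
  (forall k, is_series (b k) (row k)) -> is_lim_seq (rect_sum b K) (sum_n row K).
Proof. intro Hrow. apply is_lim_seq_sum_n, Hrow. Qed.

(* Rows first, then columns: the [K]-th partial sum of the row sums is a limit of
   rectangular sums, each bounded by the total of the column sums. *)
Lemma series_of_rows_le_cols (row col : nat -> R) l1 l2 :
  (forall k, is_series (b k) (row k)) -> (forall m, is_series (fun k => b k m) (col m)) ->
  is_series row l1 -> is_series col l2 -> l1 <= l2.
Proof.
  intros Hrow Hcol H1 H2.
  assert (col_ge0 : forall m, 0 <= col m) by (intro m; apply (series_ge0 _ (fun k => b_ge0 k m)), Hcol).
  assert (Hrect : forall K M, rect_sum b K M <= l2).
  { intros K M. rewrite rect_sum_transpose.
    apply Rle_trans with (sum_n col M); [| apply sum_n_le_series; auto].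
    apply sum_n_Rle. intro m. apply sum_n_le_series; auto. }
  refine (is_lim_seq_le _ _ _ _ _ (is_lim_of_series _ _ H1) (is_lim_seq_const l2)). intro K.
  exact (is_lim_seq_le _ _ _ _ (Hrect K) (is_lim_seq_rect_sum row K Hrow) (is_lim_seq_const l2)).
Qed.

End Tonelli.

Lemma is_series_rows_of_rect_sum_le (b : nat -> nat -> R) B :
  (forall k m, 0 <= b k m) -> (forall K M, rect_sum b K M <= B) ->
  (forall k, is_series (b k) (Series (b k))) /\ exists l, is_series (fun k => Series (b k)) l.
Proof.
  intros b_ge0 HB.
  assert (Hrow : forall k, is_series (b k) (Series (b k))).
  { intro k. apply Series_correct.
    destruct (is_series_of_bounded _ (b_ge0 k) B) as [r [Hr _]]; [| exists r; exact Hr].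
    intro M. eapply Rle_trans; [| apply (HB k M)].
    apply (term_le_sum_n (fun k => sum_n (b k) M)); auto. intro; apply sum_n_ge0; auto. }
  split; [exact Hrow |].
  destruct (is_series_of_bounded _ (fun k => series_ge0 _ (b_ge0 k) _ (Hrow k)) B) as [l [Hl _]].
  - intro K. exact (is_lim_seq_le _ _ _ _ (HB K) (is_lim_seq_rect_sum b _ K Hrow) (is_lim_seq_const B)).
  - exists l. exact Hl.
Qed.

Lemma tonelli (b : nat -> nat -> R) B :
  (forall k m, 0 <= b k m) -> (forall K M, rect_sum b K M <= B) ->
  exists (row col : nat -> R) l,
    (forall k, is_series (b k) (row k)) /\ (forall m, is_series (fun k => b k m) (col m))
    /\ is_series row l /\ is_series col l.
Proof.
  intros b_ge0 HB.
  destruct (is_series_rows_of_rect_sum_le b B b_ge0 HB) as [Hrow [l1 H1]].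
  destruct (is_series_rows_of_rect_sum_le (fun m k => b k m) B (fun m k => b_ge0 k m))
    as [Hcol [l2 H2]]; [intros; rewrite <- rect_sum_transpose; apply HB |].
  exists (fun k => Series (b k)), (fun m => Series (fun k => b k m)), l1. repeat split; auto.
  replace l1 with l2; [exact H2 |].
  apply Rle_antisym.
  - exact (series_of_rows_le_cols (fun m k => b k m) (fun m k => b_ge0 k m) _ _ _ _ Hcol Hrow H2 H1).
  - exact (series_of_rows_le_cols b b_ge0 _ _ _ _ Hrow Hcol H1 H2).
Qed.

Lemma is_series_Rext (f g : nat -> R) l : (forall n, f n = g n) -> is_series f l -> is_series g l.
Proof. apply is_series_ext. Qed.

Lemma is_series_Rscal (f : nat -> R) c l : is_series f l -> is_series (fun n => c * f n) (c * l).
Proof. apply (is_series_scal c f l). Qed.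

Lemma is_series_Rplus (f g : nat -> R) l1 l2 : is_series f l1 -> is_series g l2 ->
  is_series (fun n => f n + g n) (l1 + l2).
Proof. apply (is_series_plus f g l1 l2). Qed.

Lemma is_series_Rminus (f g : nat -> R) l1 l2 : is_series f l1 -> is_series g l2 ->
  is_series (fun n => f n - g n) (l1 - l2).
Proof. apply (is_series_minus f g l1 l2). Qed.

Lemma is_series_Ropp (f : nat -> R) l : is_series f l -> is_series (fun n => - f n) (- l).
Proof. apply (is_series_opp f l). Qed.


Lemma is_series_single (m : nat) (v : R) : is_series (fun k => if Nat.eqb k m then v else 0) v.
Proof.
  assert (Hsum : forall N,
             sum_n (fun k => if Nat.eqb k m then v else 0) N = if Nat.ltb N m then 0 else v).
  { induction N.
    - rewrite sum_O. destruct m; reflexivity.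
    - rewrite sum_n_Sr, IHN.
      destruct (Nat.eqb_spec (S N) m), (Nat.ltb_spec N m), (Nat.ltb_spec (S N) m); try lia; Rring. }
  apply is_series_of_lim, (is_lim_seq_incr_n _ m).
  eapply is_lim_seq_ext; [| apply is_lim_seq_const]. intro N.
  rewrite Hsum. destruct (Nat.ltb_spec (N + m) m); [lia | reflexivity].
Qed.

Lemma is_series_R0 : is_series (fun _ : nat => 0) 0.
Proof.
  apply (is_series_Rext (fun k => if Nat.eqb k 0 then 0 else 0)); [| apply is_series_single].
  intro k. destruct (Nat.eqb k 0); reflexivity.
Qed.

Lemma is_series_sum_n_m (f : nat -> nat -> R) (l : nat -> R) p q :
  (forall i, (p <= i <= q)%nat -> is_series (f i) (l i)) ->
  is_series (fun n => sum_n_m (fun i => f i n) p q) (sum_n_m l p q).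
Proof.
  intro H. destruct (Compare_dec.le_lt_dec p q) as [Hpq | Hpq].
  - induction Hpq.
    + rewrite sum_n_n. apply (is_series_Rext (f p)); [intro; rewrite sum_n_n; reflexivity | apply H; lia].
    + rewrite sum_n_m_Sr by lia.
      apply (is_series_Rext (fun n => sum_n_m (fun i => f i n) p m + f (S m) n)).
      { intro; rewrite sum_n_m_Sr by lia; reflexivity. }
      apply is_series_Rplus; [apply IHHpq; intros; apply H | apply H]; lia.
  - rewrite sum_n_m_empty by exact Hpq.
    apply (is_series_Rext (fun _ => 0)); [| apply is_series_R0].
    intro; rewrite sum_n_m_empty by exact Hpq; reflexivity.
Qed.

Lemma is_series_drop (f : nat -> R) l m : is_series f l ->
  is_series (fun k => if Nat.eqb k m then 0 else f k) (l - f m).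
Proof.
  intro H. apply (is_series_Rext (fun k => f k - (if Nat.eqb k m then f m else 0))).
  - intro k. destruct (Nat.eqb_spec k m); [subst; ring | ring].
  - apply is_series_Rminus, is_series_single; exact H.
Qed.

Lemma is_series_from_1 (f : nat -> R) l : is_series (fun n => f (S n)) l ->
  is_series (fun n => match n with O => 0 | S _ => f n end) l.
Proof.
  intro H. apply is_series_decr_1.
  change (plus l (opp 0)) with (l + - 0). rewrite Ropp_0, Rplus_0_r. exact H.
Qed.

(* Split [a] into the nonnegative parts [(|a| + a)/2] and [(|a| - a)/2] and apply
   Tonelli to each. *)
Lemma fubini (a : nat -> nat -> R) B (row col : nat -> R) l :
  (forall K M, rect_sum (fun k m => Rabs (a k m)) K M <= B) ->
  (forall k, is_series (a k) (row k)) -> (forall m, is_series (fun k => a k m) (col m)) ->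
  is_series row l -> is_series col l.
Proof.
  intros HB Hrow Hcol Hl.
  set (ap := fun k m => (Rabs (a k m) + a k m) / 2).
  set (an := fun k m => (Rabs (a k m) - a k m) / 2).
  assert (Hbounds : forall k m, 0 <= ap k m <= Rabs (a k m) /\ 0 <= an k m <= Rabs (a k m)).
  { intros k m. unfold ap, an. pose proof (Rle_abs (a k m)). pose proof (Rle_abs (- a k m)).
    rewrite Rabs_Ropp in *. lra. }
  destruct (tonelli ap B) as [rp [cp [lpos [Hrp [Hcp [Lrp Lcp]]]]]];
    [intros; apply Hbounds | intros; eapply Rle_trans; [apply rect_sum_Rle, Hbounds | apply HB] |].
  destruct (tonelli an B) as [rn [cn [lneg [Hrn [Hcn [Lrn Lcn]]]]]];
    [intros; apply Hbounds | intros; eapply Rle_trans; [apply rect_sum_Rle, Hbounds | apply HB] |].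
  assert (Ea : forall k m, ap k m - an k m = a k m) by (intros; unfold ap, an; field).
  assert (Erow : forall k, rp k - rn k = row k).
  { intro k. rewrite <- (is_series_unique _ _ (Hrow k)). symmetry. apply is_series_unique.
    apply (is_series_Rext (fun m => ap k m - an k m)); [apply Ea | apply is_series_Rminus; auto]. }
  assert (Ecol : forall m, cp m - cn m = col m).
  { intro m. rewrite <- (is_series_unique _ _ (Hcol m)). symmetry. apply is_series_unique.
    apply (is_series_Rext (fun k => ap k m - an k m)); [intro; apply Ea | apply is_series_Rminus; auto]. }
  replace l with (lpos - lneg).
  - apply (is_series_Rext (fun m => cp m - cn m)); [exact Ecol | apply is_series_Rminus; auto].
  - rewrite <- (is_series_unique _ _ Hl). symmetry. apply is_series_unique.
    apply (is_series_Rext (fun k => rp k - rn k)); [exact Erow | apply is_series_Rminus; auto].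
Qed.

Definition harm (e : R) (n : nat) : R := sum_n_m (fun t => e ^ t / INR t) 1 n.

Lemma harm_0 e : harm e 0 = 0.
Proof. apply sum_n_m_empty; lia. Qed.

Lemma harm_S e n : harm e (S n) = harm e n + e ^ S n / INR (S n).
Proof. apply sum_n_m_Sr; lia. Qed.

Lemma harm_1_le_S n : harm 1 n <= harm 1 (S n).
Proof.
  rewrite harm_S, pow1. pose proof (Rinv_0_lt_compat _ (INR_S_pos n)). unfold Rdiv. lra.
Qed.

Lemma harm_1_ge0 n : 0 <= harm 1 n.
Proof. induction n; [rewrite harm_0; lra | pose proof (harm_1_le_S n); lra]. Qed.

Lemma ln_le_sub_1 x : 0 < x -> ln x <= x - 1.
Proof.
  intro Hx. rewrite <- (ln_exp (x - 1)). apply ln_le; [exact Hx |].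
  pose proof (exp_ineq1_le (x - 1)). lra.
Qed.

Lemma ln_S_sub_le j : (1 <= j)%nat -> ln (INR (S j)) - ln (INR j) <= / INR j.
Proof.
  intro Hj. assert (Hp : 0 < INR j) by (apply lt_0_INR; lia).
  rewrite <- ln_div by (pose proof (INR_S_pos j); lra).
  eapply Rle_trans; [apply ln_le_sub_1, Rdiv_lt_0_compat; [apply INR_S_pos | exact Hp] |].
  rewrite S_INR. right. field. lra.
Qed.

Lemma ln_S_sub_ge j : (1 <= j)%nat -> / INR (S j) <= ln (INR (S j)) - ln (INR j).
Proof.
  intro Hj. assert (Hp : 0 < INR j) by (apply lt_0_INR; lia).
  pose proof (INR_S_pos j) as HS.
  assert (H := ln_le_sub_1 (INR j / INR (S j)) (Rdiv_lt_0_compat _ _ Hp HS)).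
  rewrite ln_div in H by lra.
  replace (INR j / INR (S j) - 1) with (- / INR (S j)) in H by (rewrite S_INR; field; lra).
  lra.
Qed.

Lemma harm_1_sub_ln_bounds n m : (1 <= n <= m)%nat ->
  ln (INR (S m)) - ln (INR (S n)) <= harm 1 m - harm 1 n <= ln (INR m) - ln (INR n).
Proof.
  intros [Hn Hm]. induction Hm; [lra |].
  rewrite harm_S, pow1.
  pose proof (ln_S_sub_le (S m) ltac:(lia)). pose proof (ln_S_sub_ge m ltac:(lia)).
  pose proof (ln_S_sub_le m ltac:(lia)).
  unfold Rdiv. rewrite Rmult_1_l. lra.
Qed.

Lemma harm_m1_double n : harm (-1) (2 * n) = harm 1 n - harm 1 (2 * n).
Proof.
  induction n; [simpl; rewrite harm_0; ring |].
  replace (2 * S n)%nat with (S (S (2 * n))) by lia.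
  rewrite (harm_S (-1) (S _)), (harm_S (-1) (2 * n)), IHn, (harm_S 1 n),
    (harm_S 1 (S _)), (harm_S 1 (2 * n)), !pow1, pow_1_odd.
  replace (S (S (2 * n))) with (2 * S n)%nat by lia.
  rewrite pow_1_even, !S_INR, !mult_INR, !S_INR, INR_0.
  pose proof (pos_INR n). field. lra.
Qed.

Lemma ln2_lt_1 : ln 2 < 1.
Proof.
  rewrite <- ln_exp. apply ln_increasing; [lra |].
  pose proof (exp_ineq1 1 ltac:(lra)). lra.
Qed.

Lemma harm_m1_double_near n : (1 <= n)%nat ->
  Rabs (harm (-1) (2 * n) + ln 2) <= / INR (S (2 * n)).
Proof.
  intro Hn. rewrite harm_m1_double.
  destruct (harm_1_sub_ln_bounds n (2 * n) ltac:(lia)) as [Lo Up].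
  assert (Hln2 : forall p, (1 <= p)%nat -> ln (INR (2 * p)) - ln (INR p) = ln 2).
  { intros p Hp. replace (INR (2 * p)) with (2 * INR p) by (rewrite mult_INR; reflexivity).
    rewrite ln_mult; [ring | lra | apply lt_0_INR; lia]. }
  rewrite (Hln2 n Hn) in Up.
  pose proof (Hln2 (S n) ltac:(lia)) as Hln2S.
  pose proof (ln_S_sub_le (S (2 * n)) ltac:(lia)) as Hstep.
  replace (S (S (2 * n))) with (2 * S n)%nat in Hstep by lia.
  apply Rabs_le. split; lra.
Qed.

Lemma harm_m1_near N : Rabs (harm (-1) N + ln 2) <= 4 / INR (S N).
Proof.
  pose proof ln_lt_2. pose proof ln2_lt_1.
  assert (Hinv : forall n, 0 < / INR (S n)) by (intro; apply Rinv_0_lt_compat, INR_S_pos).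
  destruct (Nat.Even_or_Odd N) as [[n ->] | [n ->]], n as [|n].
  - simpl. rewrite harm_0, Rplus_0_l, Rabs_pos_eq; lra.
  - eapply Rle_trans; [apply harm_m1_double_near; lia |].
    specialize (Hinv (2 * S n)%nat). unfold Rdiv. lra.
  - simpl. rewrite harm_S, harm_0. simpl.
    replace (0 + -1 * 1 / (0 + 1) + ln 2) with (ln 2 - 1) by field.
    rewrite Rabs_left1; lra.
  - replace (2 * S n + 1)%nat with (S (2 * S n)) by lia. rewrite harm_S, pow_1_odd.
    pose proof (harm_m1_double_near (S n) ltac:(lia)) as Heven.
    set (x := INR (S (2 * S n))) in *.
    assert (Hx : 3 <= x).
    { unfold x. rewrite S_INR, mult_INR, (S_INR n). replace (INR 2) with 2 by (simpl; ring).
      pose proof (pos_INR n). lra. }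
    rewrite S_INR; fold x.
    replace (harm (-1) (2 * S n) + -1 / x + ln 2) with ((harm (-1) (2 * S n) + ln 2) - / x)
      by (unfold Rdiv; ring).
    eapply Rle_trans; [apply Rabs_triang |].
    rewrite Rabs_Ropp, (Rabs_pos_eq (/ x)) by (left; apply Rinv_0_lt_compat; lra).
    apply Rle_trans with (2 / x); [unfold Rdiv; lra |].
    apply Rmult_le_reg_r with (x * (x + 1)); [nra |]. field_simplify; lra.
Qed.

Lemma is_lim_harm_m1 : is_lim_seq (harm (-1)) (- ln 2).
Proof.
  assert (H : is_lim_seq (fun N => (harm (-1) N + ln 2) - ln 2) (0 - ln 2)).
  { apply is_lim_seq_minus'; [| apply is_lim_seq_const].
    apply (is_lim_seq_0_of_le_div_S _ 4), harm_m1_near. }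
  eapply is_lim_seq_ext; [| replace (- ln 2) with (0 - ln 2) by ring; exact H].
  intro; simpl; ring.
Qed.

Lemma harm_m1_bounded N : Rabs (harm (-1) N) <= 5.
Proof.
  pose proof (harm_m1_near N). pose proof ln_lt_2. pose proof ln2_lt_1.
  assert (4 / INR (S N) <= 4).
  { unfold Rdiv. rewrite <- (Rmult_1_r 4) at 2. apply Rmult_le_compat_l; [lra |].
    rewrite <- Rinv_1. apply Rinv_le_contravar; [lra |]. rewrite S_INR. pose proof (pos_INR N). lra. }
  replace (harm (-1) N) with ((harm (-1) N + ln 2) - ln 2) by ring.
  eapply Rle_trans; [apply Rabs_triang |]. rewrite Rabs_Ropp, (Rabs_pos_eq (ln 2)); lra.
Qed.

Section UnitSign.

Variable e : R.
Hypothesis e_sq : e * e = 1.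

Lemma pow_mul_self_1 m : e ^ m * e ^ m = 1.
Proof. rewrite <- Rpow_mult_distr, e_sq. apply pow1. Qed.

Lemma pow_sub_sign n t : (t <= n)%nat -> e ^ (n - t) = e ^ n * e ^ t.
Proof.
  intro Ht. replace n with ((n - t) + t)%nat at 2 by lia.
  rewrite pow_add, Rmult_assoc, pow_mul_self_1. ring.
Qed.

Lemma sum_pow_div_add m K :
  sum_n_m (fun k => e ^ k / (INR m + INR k)) 1 K = e ^ m * (harm e (m + K) - harm e m).
Proof.
  induction K.
  - rewrite sum_n_m_empty, Nat.add_0_r by lia. Rring.
  - rewrite sum_n_m_Sr, IHK by lia.
    replace (m + S K)%nat with (S (m + K)) by lia. rewrite harm_S.
    replace (S (m + K)) with (m + S K)%nat by lia.
    rewrite plus_INR, pow_add.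
    replace (e ^ S K) with (e ^ m * e ^ m * e ^ S K) at 1 by (rewrite pow_mul_self_1; ring).
    unfold Rdiv. Rring.
Qed.

Lemma sum_pow_div_sub m K : (1 <= m <= K)%nat ->
  sum_n_m (fun k => if Nat.eqb k m then 0 else e ^ k / (INR m - INR k)) 1 K
  = e ^ m * (harm e (m - 1) - harm e (K - m)).
Proof.
  intros [H1 H2]. induction H2.
  - destruct m as [|m]; [lia |].
    rewrite sum_n_m_Sr, Nat.eqb_refl by lia.
    rewrite (sum_n_m_ext_loc _ (fun k => e ^ k / (INR (S m) - INR k)))
      by (intros k Hk; destruct (Nat.eqb_spec k (S m)); [lia | reflexivity]).
    rewrite sum_n_m_reflect, Nat.sub_diag, harm_0, Nat.sub_succ, Nat.sub_0_r.
    unfold harm. rewrite Rplus_0_r, Rminus_0_r, <- sum_n_m_Rmult_l.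
    rewrite (sum_n_m_ext_loc _ (fun t => e ^ S m * (e ^ t / INR t))); [reflexivity |].
    intros t Ht. rewrite pow_sub_sign, minus_INR by lia.
    replace (INR (S m) - (INR (S m) - INR t)) with (INR t) by ring. unfold Rdiv. Rring.
  - rewrite sum_n_m_Sr, IHle by lia.
    destruct (Nat.eqb_spec (S m0) m) as [|Hne]; [lia |].
    replace (S m0 - m)%nat with (S (m0 - m)) by lia. rewrite harm_S.
    replace (S (m0 - m)) with (S m0 - m)%nat by lia.
    rewrite pow_sub_sign, (minus_INR (S m0) m) by lia.
    assert (0 < INR (S m0) - INR m) by (apply Rlt_0_minus, lt_INR; lia).
    replace (e ^ S m0) with (e ^ S m0 * (e ^ m * e ^ m)) at 1 by (rewrite pow_mul_self_1; ring).
    Rfield. lra.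
Qed.

End UnitSign.

Lemma harm_1_shift_bound N p : 0 <= harm 1 (N + p) - harm 1 N <= INR p / INR (S N).
Proof.
  induction p.
  - rewrite Nat.add_0_r. unfold Rdiv. rewrite Rmult_0_l. lra.
  - replace (N + S p)%nat with (S (N + p)) by lia. rewrite harm_S, pow1.
    assert (Hle : / INR (S (N + p)) <= / INR (S N)).
    { apply Rinv_le_contravar; [apply INR_S_pos | apply le_INR; lia]. }
    pose proof (Rinv_0_lt_compat _ (INR_S_pos (N + p))).
    rewrite (S_INR p). unfold Rdiv in *. rewrite Rmult_1_l, Rmult_plus_distr_r. lra.
Qed.

Lemma is_lim_harm_1_shift p : is_lim_seq (fun N => harm 1 (N + p) - harm 1 N) 0.
Proof.
  apply (is_lim_seq_0_of_le_div_S _ (INR p)). intro N.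
  destruct (harm_1_shift_bound N p). rewrite Rabs_pos_eq; lra.
Qed.

Definition off_diag (i : nat) (f : nat -> R) (j : nat) : R :=
  match j with O => 0 | S _ => if Nat.eqb j i then 0 else f j end.

Lemma sum_n_off_diag i f N :
  sum_n (off_diag i f) N = sum_n_m (fun j => if Nat.eqb j i then 0 else f j) 1 N.
Proof.
  rewrite sum_n_from_1 by reflexivity.
  apply sum_n_m_ext_loc. intros [|j] Hj; [lia | reflexivity].
Qed.

(* Telescoping via [2k / (m^2 - k^2) = 1/(m - k) - 1/(m + k)]. *)
Lemma is_series_inv_sq_diff k : (1 <= k)%nat ->
  is_series (off_diag k (fun m => / (INR m ^ 2 - INR k ^ 2))) (3 / (4 * INR k ^ 2)).
Proof.
  intro Hk. assert (Hk0 : 0 < INR k) by (apply lt_0_INR; lia).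
  assert (Hsplit : forall m, (1 <= m)%nat -> (if Nat.eqb m k then 0 else / (INR m ^ 2 - INR k ^ 2))
      = / (2 * INR k) * (- (if Nat.eqb m k then 0 else 1 ^ m / (INR k - INR m))
                         - (if Nat.eqb m k then 0 else 1 ^ m / (INR k + INR m)))).
  { intros m Hm. destruct (Nat.eqb_spec m k) as [|Hne]; [ring |].
    assert (0 < INR m) by (apply lt_0_INR; lia).
    assert (INR k - INR m <> 0) by (intro E; apply Hne, INR_eq; lra).
    rewrite pow1. field. repeat split; try lra.
    replace (INR m ^ 2 - INR k ^ 2) with (- (INR k - INR m) * (INR m + INR k)) by ring.
    apply Rmult_integral_contrapositive; split; lra. }
  apply is_series_of_lim, (is_lim_seq_incr_n _ k).
  apply is_lim_seq_ext with (fun N => / (2 * INR k) * (/ INR k + / (2 * INR k))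
                                      - / (2 * INR k) * (harm 1 (N + 2 * k) - harm 1 N)).
  { intro N. rewrite sum_n_off_diag, (sum_n_m_ext_loc _ _ _ _ (fun m Hm => Hsplit m (proj1 Hm))).
    rewrite sum_n_m_Rmult_l, sum_n_m_Rminus, sum_n_m_Ropp,
      sum_pow_div_sub, sum_n_m_drop, sum_pow_div_add by (lia || ring).
    replace (N + k - k)%nat with N by lia. replace (k + (N + k))%nat with (N + 2 * k)%nat by lia.
    destruct k as [|k]; [lia |]. rewrite Nat.sub_succ, Nat.sub_0_r, (harm_S 1 k), !pow1.
    field. lra. }
  replace (3 / (4 * INR k ^ 2)) with (/ (2 * INR k) * (/ INR k + / (2 * INR k)) - / (2 * INR k) * 0)
    by (field; lra).
  apply is_lim_seq_minus'; [apply is_lim_seq_const |].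
  replace (Finite (/ (2 * INR k) * 0)) with (Rbar_mult (/ (2 * INR k)) 0) by reflexivity.
  apply is_lim_seq_scal_l, is_lim_harm_1_shift.
Qed.

Lemma is_series_telescoping : is_series (fun n => / (INR (S n) * INR (S (S n)))) 1.
Proof.
  assert (Hsum : forall N, sum_n (fun n => / (INR (S n) * INR (S (S n)))) N = 1 - / INR (S (S N))).
  { induction N.
    - rewrite sum_O. simpl. Rfield.
    - rewrite sum_n_Sr, IHN, !(S_INR (S _)), S_INR.
      pose proof (pos_INR N). Rfield. lra. }
  apply is_series_of_lim. eapply is_lim_seq_ext; [intro N; symmetry; apply Hsum |].
  replace (Finite 1) with (Finite (1 - 0)) by (f_equal; ring).
  apply is_lim_seq_minus'; [apply is_lim_seq_const |].
  apply (is_lim_seq_incr_1 (fun n => / INR (S n))), is_lim_seq_inv_S.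
Qed.

Lemma inv_pow_le_telescoping n s : (2 <= s)%nat ->
  / INR (S n) ^ s <= 2 * / (INR (S n) * INR (S (S n))).
Proof.
  intro Hs. pose proof (INR_S_pos n). pose proof (INR_S_pos (S n)).
  assert (INR (S (S n)) <= 2 * INR (S n)) by (rewrite !S_INR; pose proof (pos_INR n); lra).
  apply Rle_trans with (/ INR (S n) ^ 2).
  - apply Rinv_le_contravar; [apply pow_lt; lra |].
    apply Rle_pow; [rewrite S_INR; pose proof (pos_INR n); lra | exact Hs].
  - replace (2 * / (INR (S n) * INR (S (S n)))) with (/ (INR (S n) * (INR (S (S n)) / 2)))
      by (field; lra).
    apply Rinv_le_contravar; [apply Rmult_lt_0_compat; lra |].
    replace (INR (S n) ^ 2) with (INR (S n) * INR (S n)) by ring.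
    apply Rmult_le_compat_l; lra.
Qed.

Lemma ex_series_inv_pow s : (2 <= s)%nat -> ex_series (fun m => / INR (S m) ^ s).
Proof.
  intro Hs. apply (@ex_series_le R_AbsRing R_CompleteNormedModule _
                    (fun n => 2 * / (INR (S n) * INR (S (S n))))).
  - intro n. change (Rabs (/ INR (S n) ^ s) <= 2 * / (INR (S n) * INR (S (S n)))).
    rewrite Rabs_pos_eq by (left; apply Rinv_0_lt_compat, pow_lt, INR_S_pos).
    apply inv_pow_le_telescoping, Hs.
  - exists (2 * 1). apply is_series_Rscal, is_series_telescoping.
Qed.

Lemma is_series_zeta s : (2 <= s)%nat -> is_series (fun m => / INR (S m) ^ s) (zeta s).
Proof. intro Hs. apply Series_correct, ex_series_inv_pow, Hs. Qed.

Lemma is_series_altzeta s : (2 <= s)%nat ->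
  is_series (fun m => (-1) ^ m / INR (S m) ^ s) (altzeta s).
Proof.
  intro Hs. apply Series_correct.
  apply (@ex_series_le R_AbsRing R_CompleteNormedModule _ (fun m => / INR (S m) ^ s));
    [| apply ex_series_inv_pow, Hs].
  intro n. change (Rabs ((-1) ^ n / INR (S n) ^ s) <= / INR (S n) ^ s).
  unfold Rdiv. rewrite Rabs_mult, pow_1_abs, Rmult_1_l.
  rewrite Rabs_pos_eq by (left; apply Rinv_0_lt_compat, pow_lt, INR_S_pos). lra.
Qed.

Definition inv_pow (s m : nat) : R := match m with O => 0 | S _ => / INR m ^ s end.
Definition sign_inv_pow (s m : nat) : R := match m with O => 0 | S _ => (-1) ^ m / INR m ^ s end.

Lemma is_series_inv_pow s : (2 <= s)%nat -> is_series (inv_pow s) (zeta s).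
Proof. intro Hs. apply (is_series_from_1 (fun m => / INR m ^ s)), is_series_zeta, Hs. Qed.

Lemma is_series_sign_inv_pow s : (2 <= s)%nat -> is_series (sign_inv_pow s) (- altzeta s).
Proof.
  intro Hs. apply (is_series_from_1 (fun m => (-1) ^ m / INR m ^ s)).
  apply (is_series_Rext (fun m => - ((-1) ^ m / INR (S m) ^ s))).
  - intro m. rewrite <- tech_pow_Rmult. unfold Rdiv. ring.
  - apply is_series_Ropp, is_series_altzeta, Hs.
Qed.

Lemma is_series_sign_inv : is_series (sign_inv_pow 1) (- ln 2).
Proof.
  apply is_series_of_lim. eapply is_lim_seq_ext; [| apply is_lim_harm_m1].
  intro N. rewrite sum_n_from_1 by reflexivity. apply sum_n_m_ext_loc.
  intros [|k] Hk; [lia |]. unfold sign_inv_pow. rewrite pow_1. reflexivity.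
Qed.

Section OffDiagonalSeries.

Variable m : nat.
Hypothesis m_ge1 : (1 <= m)%nat.

Lemma is_series_off_diag (f : nat -> R) l : f 0%nat = 0 -> is_series f l ->
  is_series (off_diag m f) (l - f m).
Proof.
  intros f0 Hf. apply (is_series_Rext (fun k => if Nat.eqb k m then 0 else f k)).
  - intros [|k]; [destruct m; [lia | exact f0] | reflexivity].
  - apply is_series_drop, Hf.
Qed.

Lemma is_series_off_diag_sign_div_sub :
  is_series (off_diag m (fun k => (-1) ^ k / (INR m - INR k))) ((-1) ^ m * (harm (-1) (m - 1) + ln 2)).
Proof.
  apply is_series_of_lim, (is_lim_seq_incr_n _ m).
  eapply is_lim_seq_ext.
  { intro N. symmetry. rewrite sum_n_off_diag, sum_pow_div_sub by (ring || lia).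
    replace (N + m - m)%nat with N by lia. reflexivity. }
  replace (Finite ((-1) ^ m * (harm (-1) (m - 1) + ln 2)))
    with (Rbar_mult ((-1) ^ m) (harm (-1) (m - 1) - - ln 2)) by (simpl; f_equal; ring).
  apply is_lim_seq_scal_l, is_lim_seq_minus'; [apply is_lim_seq_const | apply is_lim_harm_m1].
Qed.

Lemma is_series_off_diag_sign_div_add :
  is_series (off_diag m (fun k => (-1) ^ k / (INR m + INR k)))
    ((-1) ^ m * (- ln 2 - harm (-1) m) - (-1) ^ m / (2 * INR m)).
Proof.
  apply is_series_of_lim, (is_lim_seq_incr_n _ m).
  eapply is_lim_seq_ext.
  { intro N. symmetry. rewrite sum_n_off_diag, sum_n_m_drop, sum_pow_div_add by (ring || lia).
    replace (INR m + INR m) with (2 * INR m) by ring. reflexivity. }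
  apply is_lim_seq_minus'; [| apply is_lim_seq_const].
  replace (Finite ((-1) ^ m * (- ln 2 - harm (-1) m)))
    with (Rbar_mult ((-1) ^ m) (- ln 2 - harm (-1) m)) by reflexivity.
  apply is_lim_seq_scal_l, is_lim_seq_minus'; [| apply is_lim_seq_const].
  assert (H := is_lim_harm_m1). apply (is_lim_seq_incr_n _ (m + m)) in H.
  eapply is_lim_seq_ext; [| exact H]. intro N. now replace (m + (N + m))%nat with (N + (m + m))%nat by lia.
Qed.

End OffDiagonalSeries.

Definition harm_div_sq (m : nat) : R := match m with O => 0 | S _ => harm 1 m / INR m ^ 2 end.

(* [sum_n harm_div_sq N + 2 (harm 1 N + 1) / N] is nonincreasing for [N >= 1]
   and equals [5] at [N = 1]. *)
Lemma sum_n_harm_div_sq_le N : sum_n harm_div_sq N <= 5.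
Proof.
  assert (Hinv : forall N, (1 <= N)%nat -> sum_n harm_div_sq N + 2 * (harm 1 N + 1) / INR N <= 5).
  { intros n Hn. induction Hn.
    - rewrite sum_n_Sr, sum_O. simpl harm_div_sq. rewrite (harm_S 1 0), harm_0. simpl. lra.
    - rewrite sum_n_Sr. unfold harm_div_sq at 2. rewrite harm_S, pow1, S_INR.
      pose proof (harm_1_ge0 m) as Hh. assert (Hm : 1 <= INR m) by (apply (le_INR 1); lia).
      set (h := harm 1 m) in *. set (x := INR m) in *.
      assert (Hdec : 0 <= 2 * (h + 1) / x
                          - ((h + 1 / (x + 1)) / (x + 1) ^ 2 + 2 * (h + 1 / (x + 1) + 1) / (x + 1))).
      { replace (2 * (h + 1) / x - ((h + 1 / (x + 1)) / (x + 1) ^ 2 + 2 * (h + 1 / (x + 1) + 1) / (x + 1)))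
          with ((x + 2) * (h * (x + 1) + 1) / (x * (x + 1) ^ 3)) by (field; lra).
        apply Rdiv_le_0_compat; [| apply Rmult_lt_0_compat; [| apply pow_lt]; lra].
        apply Rmult_le_pos; nra. }
      lra. }
  destruct N as [|N]; [rewrite sum_O; simpl; lra |].
  pose proof (Hinv (S N) ltac:(lia)).
  assert (0 <= 2 * (harm 1 (S N) + 1) / INR (S N)).
  { apply Rdiv_le_0_compat; [pose proof (harm_1_ge0 (S N)); lra | apply INR_S_pos]. }
  lra.
Qed.

(* For [1 <= k < m] this is [1 / (k m (m - k))], written in partial fractions so that
   its column sums are harmonic numbers. *)
Definition majorant (k m : nat) : R :=
  if andb (Nat.leb 1 k) (Nat.ltb k m) then / INR m ^ 2 * (/ INR k + / (INR m - INR k)) else 0.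

Lemma majorant_ge0 k m : 0 <= majorant k m.
Proof.
  unfold majorant. destruct (Nat.leb_spec 1 k), (Nat.ltb_spec k m); simpl; try lra.
  assert (0 < INR k) by (apply lt_0_INR; lia). assert (INR k < INR m) by (apply lt_INR; lia).
  apply Rmult_le_pos; [left; apply Rinv_0_lt_compat; nra |].
  pose proof (Rinv_0_lt_compat (INR k)). pose proof (Rinv_0_lt_compat (INR m - INR k)). lra.
Qed.

Lemma sum_n_eventually_0 (f : nat -> R) n0 N : (forall k, (n0 < k)%nat -> f k = 0) ->
  (n0 <= N)%nat -> sum_n f N = sum_n f n0.
Proof. intros Hf. induction 1; [reflexivity | rewrite sum_n_Sr, IHle, Hf by lia; apply Rplus_0_r]. Qed.

Lemma sum_n_majorant_col m N : sum_n (fun k => majorant k m) N <= 2 * harm_div_sq m.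
Proof.
  assert (Hout : forall k, (m <= k)%nat -> majorant k m = 0).
  { intros k Hk. unfold majorant. destruct (Nat.ltb_spec k m); [lia |]. now rewrite Bool.andb_false_r. }
  apply Rle_trans with (sum_n (fun k => majorant k m) (N + m)).
  { apply sum_n_le_mono; [intro; apply majorant_ge0 | lia]. }
  destruct m as [|m].
  - rewrite (sum_n_eventually_0 _ 0), sum_O, Hout; [simpl; lra | lia | intros; apply Hout; lia | lia].
  - rewrite (sum_n_eventually_0 _ m), sum_n_from_1; [| reflexivity | intros; apply Hout; lia | lia].
    rewrite (sum_n_m_ext_loc _ (fun k => / INR (S m) ^ 2 * (/ INR k + / (INR (S m) - INR k)))).
    2:{ intros k Hk. unfold majorant.
        destruct (Nat.leb_spec 1 k), (Nat.ltb_spec k (S m)); [reflexivity | lia ..]. }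
    rewrite sum_n_m_Rmult_l, sum_n_m_Rplus, (sum_n_m_reflect (fun k => / (INR (S m) - INR k))).
    rewrite (sum_n_m_ext_loc (fun t => / (INR (S m) - INR (S m - t))) (fun t => 1 ^ t / INR t)).
    2:{ intros t Ht. rewrite minus_INR, pow1 by lia. unfold Rdiv. rewrite Rmult_1_l. f_equal. ring. }
    rewrite (sum_n_m_ext (fun k => / INR k) (fun t => 1 ^ t / INR t))
      by (intro; rewrite pow1; unfold Rdiv; Rring).
    fold (harm 1 m). unfold harm_div_sq.
    pose proof (harm_1_le_S m). pose proof (Rinv_0_lt_compat _ (pow_lt _ 2 (INR_S_pos m))).
    unfold Rdiv. nra.
Qed.

Lemma rect_sum_majorant_le K M : rect_sum majorant K M <= 10.
Proof.
  apply Rle_trans with (rect_sum majorant (K + M) (K + M)).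
  { apply rect_sum_le_mono; [intros; apply majorant_ge0 | lia | lia]. }
  rewrite rect_sum_transpose.
  apply Rle_trans with (sum_n (fun m => 2 * harm_div_sq m) (K + M)).
  - apply sum_n_Rle. intro m. apply sum_n_majorant_col.
  - apply Rle_trans with (2 * sum_n harm_div_sq (K + M)); [right; apply (sum_n_mult_l 2) |].
    pose proof (sum_n_harm_div_sq_le (K + M)). lra.
Qed.

Definition double_term (a k m : nat) : R :=
  match k with
  | O => 0
  | S _ => off_diag k (fun m => (-1) ^ k / (INR k ^ (2 * a - 1) * (INR m ^ 2 - INR k ^ 2))) m
  end.

Lemma Rabs_inv_pow_mul_sq_diff_le c x y : (1 <= c)%nat -> 1 <= x -> 1 <= y -> x <> y ->
  Rabs (/ (x ^ c * (y ^ 2 - x ^ 2))) <= / (x * y * Rabs (y - x)).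
Proof.
  intros Hc Hx Hy Hxy.
  assert (Hd : 0 < Rabs (y - x)) by (apply Rabs_pos_lt; lra).
  assert (Hxc : x <= x ^ c) by (rewrite <- (pow_1 x) at 1; apply Rle_pow; auto).
  replace (x ^ c * (y ^ 2 - x ^ 2)) with (x ^ c * (y + x) * (y - x)) by ring.
  rewrite Rabs_inv, !Rabs_mult, (Rabs_pos_eq (x ^ c)), (Rabs_pos_eq (y + x)) by (apply pow_le || idtac; lra).
  apply Rinv_le_contravar; [apply Rmult_lt_0_compat; [nra | exact Hd] |].
  apply Rmult_le_compat_r; [lra | nra].
Qed.

Lemma Rabs_double_term_le a k m : (1 <= a)%nat ->
  Rabs (double_term a k m) <= majorant k m + majorant m k.
Proof.
  intro Ha. pose proof (majorant_ge0 k m). pose proof (majorant_ge0 m k).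
  destruct k as [|k]; [simpl; rewrite Rabs_R0; lra |]. destruct m as [|m]; [simpl; rewrite Rabs_R0; lra |].
  unfold double_term, off_diag. destruct (Nat.eqb_spec (S m) (S k)) as [|Hne]; [rewrite Rabs_R0; lra |].
  unfold Rdiv. rewrite Rabs_mult, pow_1_abs, Rmult_1_l.
  assert (Hk : 1 <= INR (S k)) by (apply (le_INR 1); lia).
  assert (Hm : 1 <= INR (S m)) by (apply (le_INR 1); lia).
  assert (Hne' : INR (S k) <> INR (S m)) by (intro E; apply Hne, eq_sym, INR_eq, E).
  eapply Rle_trans; [apply Rabs_inv_pow_mul_sq_diff_le; auto; lia |].
  unfold majorant. destruct (Nat.lt_ge_cases k m) as [Hlt | Hge].
  - assert (INR (S k) < INR (S m)) by (apply lt_INR; lia).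
    destruct (Nat.leb_spec 1 (S k)), (Nat.ltb_spec (S k) (S m)), (Nat.ltb_spec (S m) (S k));
      try lia; cbn [andb]; rewrite ?Bool.andb_false_r, ?Rplus_0_r, ?Rplus_0_l.
    rewrite Rabs_pos_eq by lra. right. field. repeat split; lra.
  - assert (INR (S m) < INR (S k)) by (apply lt_INR; lia).
    destruct (Nat.leb_spec 1 (S m)), (Nat.ltb_spec (S k) (S m)), (Nat.ltb_spec (S m) (S k));
      try lia; cbn [andb]; rewrite ?Bool.andb_false_r, ?Rplus_0_r, ?Rplus_0_l.
    rewrite Rabs_left by lra. right. field. repeat split; lra.
Qed.

Lemma rect_sum_abs_double_term_le a K M : (1 <= a)%nat ->
  rect_sum (fun k m => Rabs (double_term a k m)) K M <= 20.
Proof.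
  intro Ha. eapply Rle_trans; [apply rect_sum_Rle; intros; apply Rabs_double_term_le, Ha |].
  rewrite rect_sum_Rplus, (rect_sum_transpose (fun k m => majorant m k)).
  change (rect_sum majorant K M + rect_sum majorant M K <= 20).
  pose proof (rect_sum_majorant_le K M). pose proof (rect_sum_majorant_le M K). lra.
Qed.

Lemma is_series_double_term_row a k : (1 <= a)%nat ->
  is_series (double_term a k) (3 / 4 * sign_inv_pow (2 * a + 1) k).
Proof.
  intro Ha. destruct k as [|k].
  { apply (is_series_Rext (fun _ => 0)); [reflexivity |]. simpl. rewrite Rmult_0_r. apply is_series_R0. }
  set (c := (-1) ^ S k / INR (S k) ^ (2 * a - 1)).
  apply (is_series_Rext (fun m => c * off_diag (S k) (fun m => / (INR m ^ 2 - INR (S k) ^ 2)) m)).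
  - intros [|m]; cbn [double_term off_diag]; [ring |]. destruct (Nat.eqb (S m) (S k)); [ring |].
    unfold c, Rdiv. rewrite Rinv_mult. ring.
  - replace (3 / 4 * sign_inv_pow (2 * a + 1) (S k)) with (c * (3 / (4 * INR (S k) ^ 2))).
    + apply is_series_Rscal, is_series_inv_sq_diff. lia.
    + unfold c, sign_inv_pow. replace (2 * a + 1)%nat with ((2 * a - 1) + 2)%nat by lia.
      pose proof (INR_S_pos k). rewrite pow_add. field. split; [lra | apply pow_nonzero; lra].
Qed.

Lemma inv_pow_mul_sq_diff_expand (x y : R) (n : nat) : 0 < x -> 0 < y -> x <> y ->
  / (x ^ (2 * n + 1) * (y ^ 2 - x ^ 2)) =
  sum_n_m (fun i => / y ^ (2 * i) * / x ^ (2 * n + 3 - 2 * i)) 1 n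
  + / y ^ (2 * n + 2) * (/ x + / 2 * / (y - x) - / 2 * / (y + x)).
Proof.
  intros Hx Hy Hxy.
  assert (Hd : y ^ 2 - x ^ 2 <> 0).
  { replace (y ^ 2 - x ^ 2) with ((y - x) * (y + x)) by ring.
    apply Rmult_integral_contrapositive; split; lra. }
  assert (Hpow : forall z k, 0 < z -> z ^ k <> 0) by (intros; apply pow_nonzero; lra).
  induction n.
  - rewrite sum_n_m_empty by lia. simpl. field. repeat split; lra.
  - rewrite sum_n_m_Sr by lia.
    replace (/ (x ^ (2 * S n + 1) * (y ^ 2 - x ^ 2)))
      with (/ x ^ 2 * / (x ^ (2 * n + 1) * (y ^ 2 - x ^ 2))).
    2:{ replace (2 * S n + 1)%nat with (2 + (2 * n + 1))%nat by lia. rewrite (pow_add x 2).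
        field. repeat split; try apply Hpow; lra. }
    rewrite IHn, Rmult_plus_distr_l, <- sum_n_m_Rmult_l.
    rewrite (sum_n_m_ext_loc _ (fun i => / y ^ (2 * i) * / x ^ (2 * S n + 3 - 2 * i))).
    2:{ intros i Hi. replace (2 * S n + 3 - 2 * i)%nat with (2 + (2 * n + 3 - 2 * i))%nat by lia.
        rewrite (pow_add x 2). Rfield. repeat split; try apply Hpow; lra. }
    replace (2 * S n + 3 - 2 * S n)%nat with 3%nat by lia.
    replace (2 * S n + 2)%nat with (2 + (2 * n + 2))%nat by lia.
    replace (2 * S n)%nat with (2 * n + 2)%nat by lia.
    rewrite (pow_add y 2 (2 * n + 2)).
    pose proof (Hpow y (2 * n + 2)%nat Hy).
    set (s := sum_n_m _ 1 n). Rfield. repeat split; lra.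
Qed.

Lemma double_term_col_expand a k m : (1 <= a)%nat -> (1 <= m)%nat ->
  double_term a k m =
  sum_n_m (fun i => / INR m ^ (2 * i) * off_diag m (sign_inv_pow (2 * a + 1 - 2 * i)) k) 1 (a - 1)
  + / INR m ^ (2 * a) * (off_diag m (sign_inv_pow 1) k
                         + / 2 * off_diag m (fun k => (-1) ^ k / (INR m - INR k)) k
                         - / 2 * off_diag m (fun k => (-1) ^ k / (INR m + INR k)) k).
Proof.
  intros Ha Hm.
  assert (Hzero : forall c,
             sum_n_m (fun i => / INR m ^ (2 * i) * 0) 1 (a - 1) + c * (0 + / 2 * 0 - / 2 * 0) = 0).
  { intro c. rewrite (sum_n_m_ext _ (fun _ => 0 * 0)) by (intro; Rring).
    rewrite sum_n_m_Rmult_l. ring. }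
  destruct k as [|k]; [symmetry; apply Hzero |].
  destruct m as [|m]; [lia |].
  cbn [double_term off_diag]. rewrite (Nat.eqb_sym (S k) (S m)).
  destruct (Nat.eqb_spec (S m) (S k)) as [|Hne]; [symmetry; apply Hzero |].
  assert (Hk : 0 < INR (S k)) by apply INR_S_pos. assert (Hm0 : 0 < INR (S m)) by apply INR_S_pos.
  assert (Hne' : INR (S k) <> INR (S m)) by (intro E; apply Hne, eq_sym, INR_eq, E).
  destruct a as [|n]; [lia |].
  replace (2 * S n - 1)%nat with (2 * n + 1)%nat by lia.
  unfold Rdiv. rewrite Rmult_comm, inv_pow_mul_sq_diff_expand by auto.
  replace (S n - 1)%nat with n by lia. replace (2 * S n)%nat with (2 * n + 2)%nat by lia.
  rewrite Rmult_plus_distr_r, <- sum_n_m_Rmult_r. f_equal.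
  - apply sum_n_m_ext_loc. intros i Hi. unfold sign_inv_pow.
    replace (2 * n + 2 + 1 - 2 * i)%nat with (2 * n + 3 - 2 * i)%nat by lia. unfold Rdiv. Rring.
  - unfold sign_inv_pow. rewrite pow_1. unfold Rdiv. ring.
Qed.

Definition sign_harm_div_pow (s m : nat) : R :=
  match m with O => 0 | S _ => (-1) ^ m * harm (-1) m / INR m ^ s end.

Definition col_sum (a m : nat) : R :=
  sum_n_m (fun i => - altzeta (2 * a + 1 - 2 * i) * inv_pow (2 * i) m - sign_inv_pow (2 * a + 1) m) 1 (a - 1)
  + (- ln 2 * inv_pow (2 * a) m + ln 2 * sign_inv_pow (2 * a) m + sign_harm_div_pow (2 * a) m
     - / 2 * inv_pow (2 * a + 1) m - 3 / 4 * sign_inv_pow (2 * a + 1) m).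

Lemma pow_m1_cases n : (-1) ^ n = 1 \/ (-1) ^ n = -1.
Proof. induction n as [|n [E | E]]; [left | right | left]; simpl; try rewrite E; ring. Qed.

Lemma col_sum_S a m : (1 <= a)%nat -> col_sum a (S m) =
  sum_n_m (fun i => / INR (S m) ^ (2 * i)
                    * (- altzeta (2 * a + 1 - 2 * i) - sign_inv_pow (2 * a + 1 - 2 * i) (S m))) 1 (a - 1)
  + / INR (S m) ^ (2 * a) * ((- ln 2 - sign_inv_pow 1 (S m))
                              + / 2 * ((-1) ^ S m * (harm (-1) (S m - 1) + ln 2))
                              - / 2 * ((-1) ^ S m * (- ln 2 - harm (-1) (S m)) - (-1) ^ S m / (2 * INR (S m)))).
Proof.
  intro Ha. unfold col_sum, inv_pow, sign_inv_pow, sign_harm_div_pow.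
  set (x := INR (S m)). assert (Hx : x <> 0) by (apply not_0_INR; lia).
  f_equal.
  - apply sum_n_m_ext_loc. intros i Hi.
    replace (x ^ (2 * a + 1)) with (x ^ (2 * i) * x ^ (2 * a + 1 - 2 * i)) by (rewrite <- pow_add; f_equal; lia).
    Rfield. split; apply pow_nonzero; exact Hx.
  - rewrite Nat.sub_succ, Nat.sub_0_r, (harm_S (-1) m), (pow_add x (2 * a) 1), !pow_1. fold x.
    assert (x ^ (2 * a) <> 0) by (apply pow_nonzero; exact Hx).
    destruct (pow_m1_cases (S m)) as [E | E]; rewrite E; field; auto.
Qed.

Lemma is_series_double_term_col a m : (1 <= a)%nat ->
  is_series (fun k => double_term a k m) (col_sum a m).
Proof.
  intro Ha. destruct m as [|m].
  - apply (is_series_Rext (fun _ => 0)); [intros [|k]; reflexivity |].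
    replace (col_sum a 0) with 0; [apply is_series_R0 |].
    unfold col_sum. simpl. rewrite (sum_n_m_ext _ (fun _ => 0 * 0)) by (intro; Rring).
    rewrite sum_n_m_Rmult_l. ring.
  - rewrite col_sum_S by exact Ha.
    eapply is_series_Rext; [intro k; symmetry; apply double_term_col_expand; lia |].
    apply is_series_Rplus; [apply is_series_sum_n_m; intros i Hi; apply is_series_Rscal |
                            apply is_series_Rscal, is_series_Rminus; [apply is_series_Rplus |]].
    + apply is_series_off_diag; [lia | reflexivity | apply is_series_sign_inv_pow; lia].
    + apply is_series_off_diag; [lia | reflexivity | apply is_series_sign_inv].
    + apply is_series_Rscal, is_series_off_diag_sign_div_sub; lia.
    + apply is_series_Rscal, is_series_off_diag_sign_div_add; lia.
Qed.

Lemma ex_series_sign_harm_div_pow s : (2 <= s)%nat -> ex_series (sign_harm_div_pow s).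
Proof.
  intro Hs. apply (@ex_series_le R_AbsRing R_CompleteNormedModule _ (fun m => 5 * inv_pow s m)).
  - intro m. change (Rabs (sign_harm_div_pow s m) <= 5 * inv_pow s m).
    destruct m as [|m]; cbn [sign_harm_div_pow inv_pow]; [rewrite Rabs_R0; lra |].
    unfold Rdiv. rewrite !Rabs_mult, pow_1_abs, Rmult_1_l, (Rabs_pos_eq (/ _))
      by (left; apply Rinv_0_lt_compat, pow_lt, INR_S_pos).
    apply Rmult_le_compat_r; [left; apply Rinv_0_lt_compat, pow_lt, INR_S_pos | apply harm_m1_bounded].
  - exists (5 * zeta s). apply is_series_Rscal, is_series_inv_pow, Hs.
Qed.

Lemma is_series_col_sum a : (1 <= a)%nat ->
  is_series (col_sum a)
    (sum_n_m (fun i => - altzeta (2 * a + 1 - 2 * i) * zeta (2 * i) - - altzeta (2 * a + 1)) 1 (a - 1)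
     + (- ln 2 * zeta (2 * a) + ln 2 * - altzeta (2 * a) + Series (sign_harm_div_pow (2 * a))
        - / 2 * zeta (2 * a + 1) - 3 / 4 * - altzeta (2 * a + 1))).
Proof.
  intro Ha. apply is_series_Rplus.
  - apply is_series_sum_n_m. intros i Hi.
    apply is_series_Rminus; [apply is_series_Rscal, is_series_inv_pow | apply is_series_sign_inv_pow]; lia.
  - repeat apply is_series_Rminus || apply is_series_Rplus.
    + apply is_series_Rscal, is_series_inv_pow. lia.
    + apply is_series_Rscal, is_series_sign_inv_pow. lia.
    + apply Series_correct, ex_series_sign_harm_div_pow. lia.
    + apply is_series_Rscal, is_series_inv_pow. lia.
    + apply is_series_Rscal, is_series_sign_inv_pow. lia.
Qed.

(* Summing [double_term] by rows and by columns (Fubini) determines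
   [Series (sign_harm_div_pow (2a))]. *)
Lemma Series_sign_harm_div_pow a : (1 <= a)%nat ->
  Series (sign_harm_div_pow (2 * a)) =
  / 2 * zeta (2 * a + 1) - (INR a + / 2) * altzeta (2 * a + 1) + ln 2 * zeta (2 * a)
  + ln 2 * altzeta (2 * a) + sum_n_m (fun j => altzeta (2 * j + 1) * zeta (2 * a - 2 * j)) 1 (a - 1).
Proof.
  intro Ha.
  assert (Hrows : is_series (fun k => 3 / 4 * sign_inv_pow (2 * a + 1) k) (3 / 4 * - altzeta (2 * a + 1)))
    by (apply is_series_Rscal, is_series_sign_inv_pow; lia).
  assert (Hcols := fubini (double_term a) 20 _ _ _ (fun K M => rect_sum_abs_double_term_le a K M Ha)
                     (fun k => is_series_double_term_row a k Ha)
                     (fun m => is_series_double_term_col a m Ha) Hrows).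
  assert (E := is_series_unique _ _ Hcols). rewrite (is_series_unique _ _ (is_series_col_sum a Ha)) in E.
  rewrite (sum_n_m_ext _ (fun i => - (altzeta (2 * a + 1 - 2 * i) * zeta (2 * i)) + altzeta (2 * a + 1)))
    in E by (intro; Rring).
  rewrite sum_n_m_Rplus, sum_n_m_Ropp, sum_n_m_const, Nat.sub_succ, Nat.sub_0_r in E.
  rewrite sum_n_m_reflect in E.
  rewrite (sum_n_m_ext_loc _ (fun j => altzeta (2 * j + 1) * zeta (2 * a - 2 * j))) in E.
  - rewrite minus_INR in E by lia. simpl INR in E. lra.
  - intros j Hj. replace (2 * a + 1 - 2 * (S (a - 1) - j))%nat with (2 * j + 1)%nat by lia.
    replace (2 * (S (a - 1) - j))%nat with (2 * a - 2 * j)%nat by lia. reflexivity.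
Qed.

Lemma altH_S b n : altH b (S n) = altH b n + (-1) ^ n / INR (S n) ^ b.
Proof. unfold altH. rewrite sum_n_m_Sr, Nat.sub_succ, Nat.sub_0_r by lia. reflexivity. Qed.

Lemma is_lim_altH_S b : (2 <= b)%nat -> is_lim_seq (fun n => altH b (S n)) (altzeta b).
Proof.
  intro Hb. apply (is_lim_seq_ext (sum_n (fun m => (-1) ^ m / INR (S m) ^ b))).
  - induction n.
    + rewrite sum_O, altH_S. unfold altH. rewrite sum_n_m_empty by lia. ring.
    + rewrite sum_n_Sr, IHn, (altH_S _ (S n)). reflexivity.
  - apply is_lim_of_series, is_series_altzeta, Hb.
Qed.

Lemma sum_n_sign_altH_div s M :
  sum_n (fun m => (-1) ^ S m * altH s m / INR (S m)) M
  = harm (-1) (S M) * altH s (S M) + sum_n (fun n => sign_harm_div_pow s (S n)) M.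
Proof.
  assert (Hx : forall n, INR (S n) ^ s <> 0) by (intro; apply pow_nonzero, not_0_INR; lia).
  induction M.
  - rewrite !sum_O, altH_S. unfold altH. rewrite sum_n_m_empty by lia.
    cbn [sign_harm_div_pow]. rewrite (harm_S (-1) 0), harm_0. simpl. field. apply pow_nonzero; lra.
  - rewrite !sum_n_Sr, IHM, (altH_S _ (S M)).
    change (sign_harm_div_pow s (S (S M)))
      with ((-1) ^ S (S M) * harm (-1) (S (S M)) / INR (S (S M)) ^ s).
    rewrite (harm_S (-1) (S M)), <- !tech_pow_Rmult.
    set (T := sum_n _ M). pose proof (INR_S_pos (S M)). pose proof (Hx (S M)). Rfield. lra.
Qed.

Lemma is_series_sign_altH_div s : (2 <= s)%nat ->
  is_series (fun m => (-1) ^ S m * altH s m / INR (S m)) (Series (sign_harm_div_pow s) - ln 2 * altzeta s).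
Proof.
  intro Hs. apply is_series_of_lim.
  eapply is_lim_seq_ext; [intro M; symmetry; apply sum_n_sign_altH_div |].
  replace (Series (sign_harm_div_pow s) - ln 2 * altzeta s)
    with ((- ln 2) * altzeta s + Series (sign_harm_div_pow s)) by ring.
  apply is_lim_seq_plus'.
  - apply is_lim_seq_mult'; [apply (is_lim_seq_incr_1 (harm (-1))), is_lim_harm_m1 | apply is_lim_altH_S, Hs].
  - apply is_lim_of_series, is_series_incr_1.
    change (plus (Series (sign_harm_div_pow s)) (sign_harm_div_pow s 0))
      with (Series (sign_harm_div_pow s) + 0).
    rewrite Rplus_0_r. apply Series_correct, ex_series_sign_harm_div_pow, Hs.
Qed.

Theorem mainTheorem8 (a : nat) (ha : (1 <= a)%nat) :
  is_series (fun m : nat => (-1) ^ (S m) * altH (2 * a) m / INR (S m))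
    (/ 2 * zeta (2 * a + 1)
     - (INR a + / 2) * altzeta (2 * a + 1)
     + ln 2 * zeta (2 * a)
     + sum_n_m (fun j => altzeta (2 * j + 1) * zeta (2 * a - 2 * j)) 1 (a - 1)).
Proof.
  assert (H := is_series_sign_altH_div (2 * a) ltac:(lia)).
  rewrite Series_sign_harm_div_pow in H by exact ha.
  apply (eq_ind _ (fun l => is_series _ l) H). Rring.
Qed.
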